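(* Consider ballistic deposition started from the empty configuration. There exists a constant $A>0$ such that, with probability at least $1-\varepsilon_N$ where $\sum_N\varepsilon_N<\infty$ (in the paper's words: almost surely, for all $N$ large enough), $$\max_{i\in G_N}\sigma_i(N)\le A\log N .$$
   Context: Deposition models. Fix an integer $N\ge2$ and let $G_N=\{1,\dots,N\}$. A configuration is $\sigma=(\sigma_1,\dots,\sigma_N)\in\mathbb N^N$, $\sigma_i$ being the height of column (pile) $i$; the cluster is $\bigcup_i\{i\}\times\{0,\dots,\sigma_i\}$. Given the current configuration $\sigma$, an explorer is a walk $S_n=(X_n,Z_n)$, $n\ge0$, with $(X_n)$ i.i.d. uniform on $G_N$, $Z_0=\max_i\sigma_i+1$, and for ballistic deposition $Z_{n+1}-Z_n=-1$ for all $n$ (for diffusive deposition the increments are instead i.i.d. uniform on $\{-1,+1\}$). Let $n^*=\inf\{n\ge0:Z_n\le\sigma_{X_n}\}$ and $X^*=X_{n^*}$; the explorer attaches to column $X^*$, i.e. the new configuration is $\sigma+e_{X^*}$. Explorers are sent one at a time, independently, and $\sigma(t)$ denotes the configuration after $t$ explorers, with $\sigma(0)=(0,\dots,0)$. *)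

From Stdlib Require Import Reals Arith List.
Import ListNotations.
Open Scope R_scope.

(* Columns are indexed 0, ..., N-1 (standing for G_N = {1,...,N}).
   A configuration is a function sigma : nat -> nat; only its values
   on 0..N-1 matter. *)
Definition config := nat -> nat.

Definition col_sum (N : nat) (f : nat -> R) : R :=
  fold_right (fun i acc => f i + acc) 0 (seq 0 N).

Definition maxh (N : nat) (s : config) : nat :=
  fold_right (fun i m => Nat.max (s i) m) 0%nat (seq 0 N).

Definition add_col (s : config) (j : nat) : config :=
  fun i => if Nat.eqb i j then S (s i) else s i.

(* Ballistic deposition: probability that an explorer whose current
   height is z (before drawing its next uniform column X) attaches to
   column j, given configuration s.  It draws X uniform on the columns;
   if z <= s X it attaches to X, otherwise its height becomes z-1.
   (At z = 0 it always attaches, since s X >= 0.) *)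
Fixpoint attach (N : nat) (s : config) (z : nat) (j : nat) : R :=
  col_sum N (fun x => / INR N *
    (if Nat.leb z (s x) then (if Nat.eqb x j then 1 else 0)
     else match z with
          | O => 0
          | S z' => attach N s z' j
          end)).

Definition kernel (N : nat) (s : config) (j : nat) : R :=
  attach N s (S (maxh N s)) j.

(* Expectation of f(sigma(t)) when t explorers are sent one at a time
   from configuration s. *)
Fixpoint evolve (N : nat) (t : nat) (f : config -> R) (s : config) : R :=
  match t with
  | O => f s
  | S t' => col_sum N (fun j => kernel N s j * evolve N t' f (add_col s j))
  end.

Definition empty_config : config := fun _ => 0%nat.

Definition prob_max_le (N t : nat) (b : R) : R :=
  evolve N t (fun s => if Rle_dec (INR (maxh N s)) b then 1 else 0)
    empty_config.

From Stdlib Require Import Reals Arith List Lra Lia.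
Open Scope R_scope.

(** Consider the potential [Φ_r(σ) = Σ_i α_r ^ (σ_i + 1)].  A new particle
    lands on column [j] with probability at most [(σ_j + 1) / N], since it can
    only stick there at one of the heights [0, ..., σ_j] it passes.  Hence one
    deposition raises the mean of [Φ_r] by at most
    [(α_r - 1) / N * Σ_i (σ_i + 1) α_r ^ (σ_i + 1)], which Bernoulli's
    inequality absorbs into the larger base [α_(r+1) = α_r (1 + (α_r - 1) / N)].
    Starting from [α_0 = 11/10], the base stays below [2] for [N] steps, so
    after [N] particles [E Φ_0 <= Φ_N(0) <= 2 N].  On the other hand a column
    higher than [3 ln N / ln (11/10)] forces [Φ_0 > N ^ 3], and Markov's
    inequality bounds the failure probability by the summable [2 / N ^ 2]. *)

Definition lsum (l : list nat) (f : nat -> R) : R :=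
  fold_right (fun i acc => f i + acc) 0 l.

Lemma col_sum_lsum N f : col_sum N f = lsum (seq 0 N) f.
Proof. reflexivity. Qed.

Lemma lsum_ext l f g : (forall i, In i l -> f i = g i) -> lsum l f = lsum l g.
Proof.
  induction l as [|a l IH]; intros Hfg; simpl; [reflexivity|].
  rewrite Hfg, IH; auto with datatypes.
Qed.

Lemma lsum_le l f g : (forall i, In i l -> f i <= g i) -> lsum l f <= lsum l g.
Proof.
  induction l as [|a l IH]; intros Hfg; simpl; [lra|].
  apply Rplus_le_compat; auto with datatypes.
Qed.

Lemma lsum_add l f g : lsum l (fun i => f i + g i) = lsum l f + lsum l g.
Proof. induction l as [|a l IH]; simpl; [|rewrite IH]; ring. Qed.

Lemma lsum_mult_l l c f : lsum l (fun i => c * f i) = c * lsum l f.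
Proof. induction l as [|a l IH]; simpl; [|rewrite IH]; ring. Qed.

Lemma lsum_const l c : lsum l (fun _ => c) = INR (length l) * c.
Proof. induction l as [|a l IH]; simpl lsum; [simpl; ring|]. rewrite IH, length_cons, S_INR. ring. Qed.

Lemma lsum_0 l : lsum l (fun _ => 0) = 0.
Proof. rewrite lsum_const. ring. Qed.

Lemma lsum_nonneg l f : (forall i, In i l -> 0 <= f i) -> 0 <= lsum l f.
Proof. intros Hf. rewrite <- (lsum_0 l) at 1. now apply lsum_le. Qed.

Lemma lsum_comm l1 l2 (F : nat -> nat -> R) :
  lsum l1 (fun j => lsum l2 (fun x => F x j)) =
  lsum l2 (fun x => lsum l1 (fun j => F x j)).
Proof.
  induction l1 as [|a l1 IH]; simpl.
  - symmetry. apply lsum_0.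
  - rewrite IH, <- lsum_add. reflexivity.
Qed.

Lemma lsum_term_le l f i : (forall x, In x l -> 0 <= f x) -> In i l -> f i <= lsum l f.
Proof.
  induction l as [|a l IH]; simpl; intros Hf Hi; [contradiction|].
  destruct Hi as [-> | Hi].
  - assert (0 <= lsum l f) by (apply lsum_nonneg; auto). lra.
  - assert (0 <= f a) by auto. assert (f i <= lsum l f) by auto. lra.
Qed.

Lemma lsum_indicator_notin l j h : ~ In j l ->
  lsum l (fun x => if Nat.eqb x j then h x else 0) = 0.
Proof.
  intros Hj. transitivity (lsum l (fun _ => 0)); [apply lsum_ext | apply lsum_0]. intros i Hi. destruct (Nat.eqb_spec i j); [subst; contradiction | reflexivity].
Qed.

Lemma lsum_indicator_in l j h : NoDup l -> In j l ->
  lsum l (fun x => if Nat.eqb x j then h x else 0) = h j.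
Proof.
  induction l as [|a l IH]; intros Hl Hj; [contradiction|].
  inversion Hl as [|? ? Ha Hl']; subst. simpl.
  destruct (Nat.eqb_spec a j) as [<- | Haj].
  - rewrite lsum_indicator_notin by assumption. ring.
  - destruct Hj as [-> | Hj]; [congruence|]. rewrite IH by assumption. ring.
Qed.

Lemma lsum_indicator_le l j h : NoDup l -> 0 <= h j ->
  lsum l (fun x => if Nat.eqb x j then h x else 0) <= h j.
Proof.
  intros Hl Hh. destruct (in_dec Nat.eq_dec j l) as [Hj | Hj].
  - rewrite lsum_indicator_in by assumption. lra.
  - rewrite lsum_indicator_notin by assumption. lra.
Qed.

Lemma fold_max_attained (s : nat -> nat) l : l <> nil ->
  exists i, In i l /\ fold_right (fun i m => Nat.max (s i) m) 0%nat l = s i.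
Proof.
  induction l as [|a [|b l] IH]; intros Hl; [congruence | exists a; simpl; split; auto; lia |].
  destruct IH as [i [Hi Ei]]; [discriminate|].
  simpl fold_right in *. rewrite Ei.
  destruct (Nat.le_ge_cases (s a) (s i)); [exists i | exists a]; simpl; split; auto; lia.
Qed.

Lemma bernoulli_ineq x k : 0 <= x -> 1 + INR k * x <= (1 + x) ^ k.
Proof.
  intros Hx. induction k as [|k IH]; [simpl; lra|].
  rewrite S_INR. simpl pow. pose proof (pos_INR k). nra.
Qed.

Lemma exp_pow x n : exp x ^ n = exp (INR n * x).
Proof.
  induction n as [|n IH]; simpl pow.
  - simpl INR. now rewrite Rmult_0_l, exp_0.
  - rewrite IH, S_INR, <- exp_plus. f_equal. ring.
Qed.

Lemma pow_lt_pow_of_ln a b k m : 0 < a -> 1 < b ->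
  INR k / ln b * ln a < INR m -> a ^ k < b ^ m.
Proof.
  intros Ha Hb Hkm.
  assert (Hlb : 0 < ln b) by (rewrite <- ln_1; apply ln_increasing; lra).
  rewrite <- (exp_ln a), <- (exp_ln b), !exp_pow by lra.
  apply exp_increasing.
  apply (Rmult_lt_compat_r (ln b)) in Hkm; [|assumption].
  replace (INR k / ln b * ln a * ln b) with (INR k * ln a) in Hkm by (field; lra).
  exact Hkm.
Qed.

Section Deposition.

Variable N : nat.
Hypothesis N_pos : (0 < N)%nat.

Let INR_N_pos : 0 < INR N.
Proof. now apply lt_0_INR. Qed.

Lemma attach_unfold s z j : attach N s z j = col_sum N (fun x => / INR N *
    (if Nat.leb z (s x) then (if Nat.eqb x j then 1 else 0)
     else match z with
          | O => 0
          | S z' => attach N s z' j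
          end)).
Proof. destruct z; reflexivity. Qed.

Lemma attach_nonneg s z j : 0 <= attach N s z j.
Proof.
  pose proof (Rinv_0_lt_compat _ INR_N_pos).
  induction z as [|z IH]; rewrite attach_unfold, col_sum_lsum;
    apply lsum_nonneg; intros x _.
  - destruct (Nat.leb 0 (s x)), (Nat.eqb x j); nra.
  - destruct (Nat.leb (S z) (s x)); [destruct (Nat.eqb x j)|]; nra.
Qed.

Lemma uniform_mixture_total (B : nat -> nat -> R) :
  (forall x, (x < N)%nat -> lsum (seq 0 N) (B x) = 1) ->
  lsum (seq 0 N) (fun j => lsum (seq 0 N) (fun x => / INR N * B x j)) = 1.
Proof.
  intros HB. rewrite lsum_comm.
  rewrite (lsum_ext _ _ (fun _ => / INR N)).
  - rewrite lsum_const, length_seq. field. lra.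
  - intros x Hx. apply in_seq in Hx. rewrite lsum_mult_l, HB by lia. ring.
Qed.

Lemma point_mass_total x : (x < N)%nat ->
  lsum (seq 0 N) (fun j => if Nat.eqb x j then 1 else 0) = 1.
Proof.
  intros Hx. rewrite (lsum_ext _ _ (fun j => if Nat.eqb j x then 1 else 0))
    by (intros j _; now rewrite Nat.eqb_sym).
  apply lsum_indicator_in; [apply seq_NoDup | apply in_seq; lia].
Qed.

Lemma attach_total s z : col_sum N (attach N s z) = 1.
Proof.
  induction z as [|z IH]; rewrite col_sum_lsum, (lsum_ext _ _ _ (fun j _ => attach_unfold s _ j));
    apply uniform_mixture_total; intros x Hx.
  - exact (point_mass_total x Hx).
  - destruct (Nat.leb (S z) (s x)); [exact (point_mass_total x Hx) | exact IH].
Qed.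

(* The explorer sticks to column [j] only at one of the [min z (s j) + 1]
   heights [w <= s j] it visits, each time with probability [1 / N]. *)
Lemma attach_le s z j : attach N s z j <= (INR (Nat.min z (s j)) + 1) / INR N.
Proof.
  pose proof (Rinv_0_lt_compat _ INR_N_pos).
  induction z as [|z IH]; rewrite attach_unfold, col_sum_lsum.
  - rewrite (lsum_ext _ _ (fun x => if Nat.eqb x j then / INR N else 0))
      by (intros x _; simpl; destruct (Nat.eqb x j); ring).
    eapply Rle_trans; [apply (lsum_indicator_le _ _ (fun _ => / INR N)); [apply seq_NoDup | lra]|].
    simpl. lra.
  - set (hit := if Nat.leb (S z) (s j) then / INR N else 0).
    pose proof (attach_nonneg s z j).
    eapply Rle_trans.
    { apply (lsum_le _ _ (fun x => (if Nat.eqb x j then hit else 0) + / INR N * attach N s z j)).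
      intros x _. unfold hit.
      destruct (Nat.eqb_spec x j) as [-> |].
      - destruct (Nat.leb (S z) (s j)); nra.
      - destruct (Nat.leb (S z) (s x)); nra. }
    rewrite lsum_add, lsum_const, length_seq.
    eapply Rle_trans.
    { apply Rplus_le_compat_r, (lsum_indicator_le _ _ (fun _ => hit)); [apply seq_NoDup|].
      unfold hit; destruct (Nat.leb _ _); lra. }
    replace (INR N * (/ INR N * attach N s z j)) with (attach N s z j) by (field; lra).
    unfold hit. destruct (Nat.leb_spec (S z) (s j)).
    + rewrite !Nat.min_l in * by lia.
      replace ((INR (S z) + 1) / INR N) with (/ INR N + (INR z + 1) / INR N)
        by (rewrite S_INR; field; lra).
      lra.
    + rewrite !Nat.min_r in * by lia. lra.
Qed.

Lemma kernel_nonneg s j : 0 <= kernel N s j.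
Proof. apply attach_nonneg. Qed.

Lemma kernel_total s : col_sum N (kernel N s) = 1.
Proof. apply attach_total. Qed.

Lemma kernel_le s j : kernel N s j <= (INR (s j) + 1) / INR N.
Proof.
  eapply Rle_trans; [apply attach_le|].
  apply Rmult_le_compat_r; [left; now apply Rinv_0_lt_compat|].
  apply Rplus_le_compat_r, le_INR. lia.
Qed.

Fixpoint alpha (r : nat) : R :=
  match r with
  | O => 11/10
  | S r' => alpha r' * (1 + (alpha r' - 1) / INR N)
  end.

Definition potential (r : nat) (s : config) : R :=
  col_sum N (fun x => alpha r ^ (s x + 1)).

Lemma alpha_ge_1 r : 1 <= alpha r.
Proof.
  induction r as [|r IH]; simpl; [lra|].
  assert (0 <= (alpha r - 1) / INR N) by (apply Rle_mult_inv_pos; lra). nra.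
Qed.

Lemma potential_nonneg r s : 0 <= potential r s.
Proof.
  apply lsum_nonneg. intros x _. apply pow_le. pose proof (alpha_ge_1 r). lra.
Qed.

Lemma potential_add_col r s j : (j < N)%nat ->
  potential r (add_col s j) = potential r s + alpha r ^ (s j + 1) * (alpha r - 1).
Proof.
  intros Hj. unfold potential. rewrite !col_sum_lsum.
  rewrite (lsum_ext _ _ (fun x => alpha r ^ (s x + 1) +
     (if Nat.eqb x j then alpha r ^ (s x + 1) * (alpha r - 1) else 0))).
  - rewrite lsum_add, lsum_indicator_in; [reflexivity | apply seq_NoDup | apply in_seq; lia].
  - intros x _. unfold add_col. destruct (Nat.eqb_spec x j); [|ring].
    replace (S (s x) + 1)%nat with (S (s x + 1)) by lia. simpl. ring.
Qed.

Lemma potential_drift r s :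
  col_sum N (fun j => kernel N s j * potential r (add_col s j)) <= potential (S r) s.
Proof.
  pose proof (alpha_ge_1 r) as Ha. set (a := alpha r) in *.
  rewrite col_sum_lsum.
  rewrite (lsum_ext _ _ (fun j => potential r s * kernel N s j
                                   + kernel N s j * (a ^ (s j + 1) * (a - 1)))).
  2:{ intros j Hj. apply in_seq in Hj. rewrite potential_add_col by lia. fold a. ring. }
  rewrite lsum_add, lsum_mult_l, <- col_sum_lsum, kernel_total, Rmult_1_r.
  eapply Rle_trans.
  { apply Rplus_le_compat_l,
      (lsum_le _ _ (fun j => (INR (s j) + 1) / INR N * (a ^ (s j + 1) * (a - 1)))).
    intros j _. apply Rmult_le_compat_r; [|apply kernel_le].
    apply Rmult_le_pos; [apply pow_le|]; lra. }
  unfold potential at 1. rewrite col_sum_lsum, <- lsum_add.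
  apply lsum_le. intros j _.
  simpl alpha. fold a. rewrite Rpow_mult_distr.
  assert (Hd : 0 <= (a - 1) / INR N) by (apply Rle_mult_inv_pos; lra).
  pose proof (bernoulli_ineq _ (s j + 1) Hd) as B.
  rewrite plus_INR in B. simpl INR in B.
  assert (0 <= a ^ (s j + 1)) by (apply pow_le; lra).
  replace ((INR (s j) + 1) / INR N * (a ^ (s j + 1) * (a - 1)))
    with (a ^ (s j + 1) * ((INR (s j) + 1) * ((a - 1) / INR N))) by (field; lra).
  nra.
Qed.

Lemma evolve_ge_potential f c : 0 <= c ->
  (forall s, 1 - c * potential 0 s <= f s) ->
  forall r s, 1 - c * potential r s <= evolve N r f s.
Proof.
  intros Hc Hf r. induction r as [|r IH]; intros s; [apply Hf|].
  simpl evolve. rewrite col_sum_lsum.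
  eapply Rle_trans.
  2:{ apply lsum_le. intros j _. apply Rmult_le_compat_l; [apply kernel_nonneg | apply IH]. }
  rewrite (lsum_ext _ _ (fun j => kernel N s j + - c * (kernel N s j * potential r (add_col s j))))
    by (intros; ring).
  rewrite lsum_add, lsum_mult_l, <- !col_sum_lsum, kernel_total.
  pose proof (potential_drift r s). nra.
Qed.

Lemma one_plus_2_div_pow_le_9 : (1 + 2 / INR N) ^ N <= 9.
Proof.
  assert (0 < 2 / INR N) by (apply Rdiv_lt_0_compat; lra).
  eapply Rle_trans.
  { apply pow_incr. split; [lra|]. left. apply exp_ineq1. lra. }
  rewrite exp_pow. replace (INR N * (2 / INR N)) with (1 + 1) by (field; lra).
  rewrite exp_plus. pose proof exp_le_3. pose proof (exp_pos 1). nra.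
Qed.

Lemma alpha_sub_1_le r : (r <= N)%nat -> alpha r - 1 <= 1/10 * (1 + 2 / INR N) ^ r.
Proof.
  assert (0 <= 2 / INR N) by (apply Rle_mult_inv_pos; lra).
  induction r as [|r IH]; intros Hr; simpl alpha; [simpl; lra|].
  assert (Hpr : (1 + 2 / INR N) ^ r <= 9).
  { eapply Rle_trans; [apply Rle_pow with (n := N); [lra | lia] |].
    apply one_plus_2_div_pow_le_9. }
  specialize (IH ltac:(lia)). pose proof (alpha_ge_1 r).
  set (a := alpha r) in *.
  replace (a * (1 + (a - 1) / INR N) - 1) with ((a - 1) * (1 + a / INR N)) by (field; lra).
  assert (a / INR N <= 2 / INR N) by (apply Rmult_le_compat_r; [left; apply Rinv_0_lt_compat|]; lra).
  assert (0 <= a / INR N) by (apply Rle_mult_inv_pos; lra).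
  simpl pow. nra.
Qed.

Lemma potential_empty_le : potential N empty_config <= 2 * INR N.
Proof.
  unfold potential, empty_config. simpl Nat.add.
  rewrite col_sum_lsum, lsum_const, length_seq, pow_1.
  pose proof (alpha_sub_1_le N (le_n N)). pose proof one_plus_2_div_pow_le_9.
  rewrite Rmult_comm. apply Rmult_le_compat_r; lra.
Qed.

Lemma alpha_0_pow_maxh_le s : (11/10) ^ maxh N s <= potential 0 s.
Proof.
  destruct (fold_max_attained s (seq 0 N)) as [i [Hi Ei]].
  { destruct N; [lia | discriminate]. }
  change (fold_right _ _ _) with (maxh N s) in Ei. rewrite Ei.
  eapply Rle_trans; [apply Rle_pow with (n := (s i + 1)%nat); [lra | lia]|].
  apply (lsum_term_le _ (fun x => alpha 0 ^ (s x + 1))); [|assumption].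
  intros x _. apply pow_le. simpl. lra.
Qed.

Lemma max_indicator_ge s :
  1 - / INR N ^ 3 * potential 0 s <=
  (if Rle_dec (INR (maxh N s)) (INR 3 / ln (11/10) * ln (INR N)) then 1 else 0).
Proof.
  assert (0 < INR N ^ 3) by (apply pow_lt; lra).
  destruct (Rle_dec _ _) as [_ | Hgt].
  - pose proof (potential_nonneg 0 s).
    assert (0 <= / INR N ^ 3 * potential 0 s) by (apply Rmult_le_pos; [left; apply Rinv_0_lt_compat|]; lra).
    lra.
  - apply Rnot_le_lt, pow_lt_pow_of_ln in Hgt; [|lra|lra].
    pose proof (alpha_0_pow_maxh_le s).
    enough (1 <= / INR N ^ 3 * potential 0 s) by lra.
    apply (Rmult_le_reg_l (INR N ^ 3)); [assumption|].
    rewrite <- Rmult_assoc, Rinv_r; lra.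
Qed.

End Deposition.

Lemma infinite_sum_telescoping c : 0 < c ->
  infinite_sum (fun n => c / ((INR n + 1) * (INR n + 2))) c.
Proof.
  intros Hc.
  assert (Hpartial : forall k,
    sum_f_R0 (fun n => c / ((INR n + 1) * (INR n + 2))) k = c - c / (INR k + 2)).
  { induction k as [|k IH].
    - simpl. field.
    - rewrite tech5, IH. cbv beta. rewrite S_INR. pose proof (pos_INR k). field. lra. }
  intros e He. destruct (archimed_cor1 (e / c)) as [K [HK HK0]].
  { apply Rdiv_lt_0_compat; assumption. }
  exists K. intros k Hk. unfold R_dist. rewrite Hpartial.
  assert (HKk : INR K <= INR k) by (apply le_INR; lia).
  assert (0 < INR K) by (apply lt_0_INR; lia).
  assert (0 < c / (INR k + 2)) by (apply Rdiv_lt_0_compat; lra).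
  rewrite Rabs_left1 by lra.
  assert (c / (INR k + 2) <= c / INR K)
    by (apply Rmult_le_compat_l; [lra | apply Rinv_le_contravar; lra]).
  assert (c / INR K < e).
  { apply (Rmult_lt_compat_l c) in HK; [|assumption].
    replace (c * (e / c)) with e in HK by (field; lra). exact HK. }
  lra.
Qed.

Lemma two_div_sqr_le n : 2 <= n -> 2 / n ^ 2 <= 6 / ((n + 1) * (n + 2)).
Proof.
  intros Hn.
  apply (Rmult_le_reg_r (n ^ 2 * ((n + 1) * (n + 2)))); [apply Rmult_lt_0_compat; nra|].
  replace (2 / n ^ 2 * (n ^ 2 * ((n + 1) * (n + 2)))) with (2 * ((n + 1) * (n + 2))) by (field; lra).
  replace (6 / ((n + 1) * (n + 2)) * (n ^ 2 * ((n + 1) * (n + 2)))) with (6 * n ^ 2) by (field; nra).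
  nra.
Qed.

Theorem theorem1p2 :
  exists A : R, 0 < A /\
  exists eps : nat -> R,
    (forall N, 0 <= eps N) /\
    (exists l : R, infinite_sum eps l) /\
    (forall N : nat, (2 <= N)%nat ->
       1 - eps N <= prob_max_le N N (A * ln (INR N))).
Proof.
  assert (Hln : 0 < ln (11/10)) by (rewrite <- ln_1; apply ln_increasing; lra).
  exists (INR 3 / ln (11/10)). split; [apply Rdiv_lt_0_compat; simpl; lra|].
  exists (fun n => 6 / ((INR n + 1) * (INR n + 2))). split; [|split].
  - intros n. pose proof (pos_INR n). apply Rle_mult_inv_pos; nra.
  - exists 6. apply infinite_sum_telescoping. lra.
  - intros N HN.
    assert (Hn : 2 <= INR N) by (apply (le_INR 2) in HN; exact HN).
    assert (HN0 : (0 < N)%nat) by lia.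
    assert (Hc : 0 < / INR N ^ 3) by (apply Rinv_0_lt_compat, pow_lt; lra).
    eapply Rle_trans;
      [|apply (evolve_ge_potential N HN0 _ _ (Rlt_le _ _ Hc)), max_indicator_ge, HN0].
    pose proof (potential_empty_le N HN0). pose proof (two_div_sqr_le _ Hn).
    enough (/ INR N ^ 3 * potential N N empty_config <= 2 / INR N ^ 2) by lra.
    apply (Rmult_le_reg_l (INR N ^ 3)); [apply pow_lt; lra|].
    rewrite <- Rmult_assoc, Rinv_r by (apply pow_nonzero; lra).
    replace (INR N ^ 3 * (2 / INR N ^ 2)) with (2 * INR N) by (field; lra).
    lra.
Qed.
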